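(* Let $q\in\mathbb{C}\setminus\{0,1\}$. The left diagonal formal $q$-complex $0\to\mathbb{C}[[x_1,x_2]][[y]]\xrightarrow{d_y^0}\mathbb{C}[[x_1,x_2]][[y]]^{\oplus2}\xrightarrow{d_y^1}\mathbb{C}[[x_1,x_2]][[y]]\xrightarrow{\pi_y}\mathbb{C}[[x]]\to0$ and the right diagonal formal $q$-complex $0\to[[x]]\mathbb{C}[[y_1,y_2]]\xrightarrow{d_x^0}([[x]]\mathbb{C}[[y_1,y_2]])^{\oplus2}\xrightarrow{d_x^1}[[x]]\mathbb{C}[[y_1,y_2]]\xrightarrow{\pi_x}\mathbb{C}[[y]]\to0$ are exact.
   Context: $\mathbb{C}[[x_1,x_2]][[y]]$ is the Fréchet space of formal series $f=\sum_{n\ge0}f_n(x_1,x_2)y^n$ with $f_n\in\mathbb{C}[[x_1,x_2]]$ (product topology). Operators: $N_yf=\sum_{n\ge1}f_{n-1}y^n$, $D_{y,q}f=\sum_nq^nf_ny^n$, and $x_i$ acts by multiplication on the coefficients. $d_y^0f=(N_yf,\ (x_2-qx_1D_{y,q})f)$, $d_y^1(f,g)=(x_2-x_1D_{y,q})f-N_yg$, $\pi_y(\sum_nh_ny^n)=h_0(x,x)$. Symmetrically $[[x]]\mathbb{C}[[y_1,y_2]]$ consists of $f=\sum_{n\ge0}x^nf_n(y_1,y_2)$, with $N_xf=\sum_{n\ge1}x^nf_{n-1}$, $D_{x,q}f=\sum_nx^nq^nf_n$, $y_i$ acting by multiplication on coefficients; $d_x^0f=((y_1-qy_2D_{x,q})f,\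 N_xf)$, $d_x^1(f,g)=N_xf+(y_2D_{x,q}-y_1)g$, $\pi_x(\sum_nx^nh_n)=h_0(y,y)$. *)

From mathcomp Require Import all_boot all_algebra.
From mathcomp Require Import Rstruct.
From mathcomp Require Export complex.
Set Implicit Arguments. Unset Strict Implicit. Unset Printing Implicit Defensive.
Import GRing.Theory.
Local Open Scope ring_scope.

Definition C : numClosedFieldType := Rdefinitions.R[i].

Section FormalSeries.
Variable K : fieldType.

(* K[[x]] : coefficient sequences, s k = coefficient of x^k *)
Definition ser1 := nat -> K.
(* K[[x1,x2]] : g i j = coefficient of x1^i x2^j *)
Definition ser2 := nat -> nat -> K.
(* K[[x1,x2]][[y]] (resp. [[x]]K[[y1,y2]]) : f n = n-th coefficient series f_n *)
Definition ser3 := nat -> ser2.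

Definition zero1 : ser1 := fun _ => 0.
Definition zero2 : ser2 := fun _ _ => 0.
Definition zero3 : ser3 := fun _ => zero2.

Definition add3 (f g : ser3) : ser3 := fun n i j => f n i j + g n i j.
Definition sub3 (f g : ser3) : ser3 := fun n i j => f n i j - g n i j.
Definition scale3 (c : K) (f : ser3) : ser3 := fun n i j => c * f n i j.

Definition mulv1 (g : ser2) : ser2 :=
  fun i j => if i is i'.+1 then g i' j else 0.
Definition mulv2 (g : ser2) : ser2 :=
  fun i j => if j is j'.+1 then g i j' else 0.

Definition Mul1 (f : ser3) : ser3 := fun n => mulv1 (f n).
Definition Mul2 (f : ser3) : ser3 := fun n => mulv2 (f n).

Definition Nop (f : ser3) : ser3 := fun n => if n is n'.+1 then f n' else zero2.
Definition Dop (q : K) (f : ser3) : ser3 := fun n i j => q ^+ n * f n i j.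

(* diagonal evaluation h_0(z,z) of the constant coefficient h_0 *)
Definition diag0 (h : ser3) : ser1 :=
  fun k => \sum_(i < k.+1) h 0%N i (k - i)%N.

(* ---- left diagonal complex on K[[x1,x2]][[y]]  (x_1 = var 1, x_2 = var 2) *)
Definition Ny := Nop.
Definition Dyq := Dop.
Definition dy0 (q : K) (f : ser3) : ser3 * ser3 :=
  (Ny f, sub3 (Mul2 f) (scale3 q (Mul1 (Dyq q f)))).
Definition dy1 (q : K) (fg : ser3 * ser3) : ser3 :=
  sub3 (sub3 (Mul2 fg.1) (Mul1 (Dyq q fg.1))) (Ny fg.2).
Definition piy (h : ser3) : ser1 := diag0 h.

(* ---- right diagonal complex on [[x]]K[[y1,y2]]  (y_1 = var 1, y_2 = var 2) *)
Definition Nx := Nop.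
Definition Dxq := Dop.
Definition dx0 (q : K) (f : ser3) : ser3 * ser3 :=
  (sub3 (Mul1 f) (scale3 q (Mul2 (Dxq q f))), Nx f).
Definition dx1 (q : K) (fg : ser3 * ser3) : ser3 :=
  add3 (Nx fg.1) (sub3 (Mul2 (Dxq q fg.2)) (Mul1 fg.2)).
Definition pix (h : ser3) : ser1 := diag0 h.

End FormalSeries.

Definition exact_4term {A B E F : Type} (zA : A) (zB : B) (zE : E) (zF : F)
  (d0 : A -> B) (d1 : B -> E) (p : E -> F) : Prop :=
  [/\ (forall a, d0 a = zB -> a = zA),
      (forall b, d1 b = zE <-> exists a, d0 a = b),
      (forall e, p e = zF <-> exists b, d1 b = e)
    & (forall u, exists e, p e = u)].

(** [N] is injective, hence so is [d^0]. In [y]-degree 0 a cycle [(f, g)] of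
    [d^1] gives [(x2 - x1) f_0 = 0], so [f_0 = 0], and the higher degrees of
    [d^1 (f, g) = 0] say exactly that [(f, g) = d^0 (f / y)]: the twist by [q]
    in [d^0] is what makes [(x2 - x1 D) N = N (x2 - q x1 D)]. The image of [d^1]
    is everything in degrees [>= 1] and [(x2 - x1) f_0] in degree 0, and a
    series in [x1, x2] vanishes on the diagonal iff it is divisible by
    [x2 - x1]. Exchanging the two variables, with a sign, identifies the right
    complex with the left one. *)

From mathcomp Require Import all_boot all_algebra.
From mathcomp Require Import ring zify.
From Stdlib Require Import FunctionalExtensionality.
Set Implicit Arguments. Unset Strict Implicit. Unset Printing Implicit Defensive.
Import GRing.Theory.
Local Open Scope ring_scope.

Section ExactIso.
Variables (A B E F A' B' E' F' : Type).
Variables (zA : A) (zB : B) (zE : E) (zF : F) (zA' : A') (zB' : B') (zE' : E') (zF' : F').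
Variables (d0 : A -> B) (d1 : B -> E) (p : E -> F).
Variables (d0' : A' -> B') (d1' : B' -> E') (p' : E' -> F').
Variables (iA : A -> A') (iB : B -> B') (iE : E -> E') (iF : F -> F').
Hypotheses (iA_bij : bijective iA) (iB_bij : bijective iB) (iE_bij : bijective iE).
Hypothesis iF_inj : injective iF.
Hypotheses (iA0 : iA zA = zA') (iB0 : iB zB = zB') (iE0 : iE zE = zE') (iF0 : iF zF = zF').
Hypotheses (d0_iso : forall a, d0' (iA a) = iB (d0 a))
           (d1_iso : forall b, d1' (iB b) = iE (d1 b))
           (p_iso : forall e, p' (iE e) = iF (p e)).

Let inj_eq_iff (X Y : Type) (i : X -> Y) (x y : X) : injective i -> i x = i y <-> x = y.
Proof. by move=> i_inj; split=> [/i_inj | ->]. Qed.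

Lemma exact_4term_iso :
  exact_4term zA' zB' zE' zF' d0' d1' p' -> exact_4term zA zB zE zF d0 d1 p.
Proof.
have [jA _ jAK] := iA_bij; have iB_inj := bij_inj iB_bij.
have [jE _ jEK] := iE_bij.
case=> d0'_inj ker_d1' ker_p' p'_surj; split.
- move=> a /(congr1 iB); rewrite -d0_iso iB0 => /d0'_inj.
  by rewrite -iA0 => /(bij_inj iA_bij).
- move=> b; rewrite -(inj_eq_iff _ _ (bij_inj iE_bij)) iE0 -d1_iso ker_d1'.
  split=> [[a' d0a'] | [a <-]]; last by exists (iA a).
  by exists (jA a'); apply: iB_inj; rewrite -d0_iso jAK.
- move=> e; rewrite -(inj_eq_iff _ _ iF_inj) iF0 -p_iso ker_p'.
  split=> [[b' d1b'] | [b <-]]; last by exists (iB b).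
  have [jB _ jBK] := iB_bij.
  by exists (jB b'); apply: (bij_inj iE_bij); rewrite -d1_iso jBK.
- move=> u; have [e' pe'] := p'_surj (iF u).
  by exists (jE e'); apply: iF_inj; rewrite -p_iso jEK.
Qed.

End ExactIso.

Section DiagonalComplex.
Variable K : fieldType.

Lemma ser1_ext (f g : ser1 K) : (forall k, f k = g k) -> f = g.
Proof. exact: functional_extensionality. Qed.

Lemma ser2_ext (f g : ser2 K) : (forall i j, f i j = g i j) -> f = g.
Proof. by move=> fg; do 2 (apply: functional_extensionality => ?); apply: fg. Qed.

Lemma ser3_ext (f g : ser3 K) : (forall n i j, f n i j = g n i j) -> f = g.
Proof. by move=> fg; do 3 (apply: functional_extensionality => ?); apply: fg. Qed.

Definition mulv_diff (h : ser2 K) : ser2 K := fun i j => mulv2 h i j - mulv1 h i j.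

Definition diag (h : ser2 K) : ser1 K := fun k => \sum_(i < k.+1) h i (k - i)%N.

(** The solution of [(x2 - x1) f = e]: its coefficients satisfy
    [f i j - f i.-1 j.+1 = e i j.+1], which telescopes. *)
Definition divv_diff (e : ser2 K) : ser2 K :=
  fun i j => \sum_(t < i.+1) e t (i + j + 1 - t)%N.

Lemma mulv_diff_eq0 (h : ser2 K) : mulv_diff h = @zero2 K -> h = @zero2 K.
Proof.
move=> hx0; apply: ser2_ext; elim=> [|i IHi] j.
  by have := congr1 (fun g => g 0%N j.+1) hx0; rewrite /mulv_diff /= subr0.
by have := congr1 (fun g => g i.+1 j.+1) hx0; rewrite /mulv_diff /= IHi subr0.
Qed.

Lemma diag_mulv_diff (h : ser2 K) : diag (mulv_diff h) = @zero1 K.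
Proof.
apply: ser1_ext => -[|k]; rewrite /diag /mulv_diff sumrB.
  by rewrite !big_ord1 subrr.
rewrite [X in X - _]big_ord_recr [X in _ - X]big_ord_recl /= subnn addr0 add0r.
apply/eqP; rewrite subr_eq0; apply/eqP/eq_bigr => i _.
by rewrite /bump add1n subSS subSn // -ltnS.
Qed.

Lemma mulv_divv_diff (e : ser2 K) : diag e = @zero1 K -> mulv_diff (divv_diff e) = e.
Proof.
move=> diag_e0; apply: ser2_ext => i j.
have diag_e k : \sum_(t < k.+1) e t (k - t)%N = 0 := congr1 (fun s => s k) diag_e0.
rewrite /mulv_diff /mulv1 /mulv2 /divv_diff.
case: j => [|j]; case: i => [|i].
- by have := diag_e 0%N; rewrite big_ord1 subr0 => ->.
- have /eqP := diag_e i.+1; rewrite big_ord_recr /= subnn addrC addr_eq0 => /eqP ->.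
  by rewrite sub0r; congr (- _); apply: eq_bigr => t _; rewrite addn0 addn1.
- by rewrite big_ord1 subr0 subn0 add0n addn1.
- rewrite big_ord_recr /= addrAC addSnnS subrr add0r; congr (e _ _); lia.
Qed.

Lemma diag0_surj (u : ser1 K) : exists e, diag0 e = u.
Proof.
exists (fun n i j => if (n, i) is (0, 0)%N then u j else 0).
by apply: ser1_ext => k; rewrite /diag0 big_ord_recl /= subn0 big1 ?addr0.
Qed.

Definition shift (f : ser3 K) : ser3 K := fun n => f n.+1.

Lemma NopK (f : ser3 K) : f 0%N = @zero2 K -> Nop (shift f) = f.
Proof. by move=> f0; apply: ser3_ext => -[|n] i j //=; rewrite f0. Qed.

Variable q : K.

Lemma dy1_coef0 (b : ser3 K * ser3 K) : dy1 q b 0%N = mulv_diff (b.1 0%N).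
Proof.
apply: ser2_ext => -[|i] j.
  by rewrite /dy1 /sub3 /mulv_diff /= !subr0.
by rewrite /dy1 /sub3 /mulv_diff /Dyq /Dop /= expr0 mul1r subr0.
Qed.

Lemma dy0_inj (a : ser3 K) : dy0 q a = (@zero3 K, @zero3 K) -> a = @zero3 K.
Proof.
by move=> [Na0 _]; apply: ser3_ext => n i j; have := congr1 (fun f => f n.+1 i j) Na0.
Qed.

Lemma dy1_dy0 (a : ser3 K) : dy1 q (dy0 q a) = @zero3 K.
Proof.
apply: ser3_ext => n i j.
rewrite /dy1 /dy0 /sub3 /scale3 /Mul1 /Mul2 /Ny /Nop /Dyq /Dop /zero3 /zero2 /=.
by rewrite /mulv1 /mulv2; case: n => [|n]; case: i => [|i]; case: j => [|j] /=;
  rewrite ?exprS; ring.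
Qed.

Lemma dy1_eq0 (f g : ser3 K) : dy1 q (f, g) = @zero3 K -> dy0 q (shift f) = (f, g).
Proof.
move=> cycle_fg.
have f0 : f 0%N = @zero2 K.
  by apply: mulv_diff_eq0; rewrite -[f 0%N]/((f, g).1 0%N) -dy1_coef0 cycle_fg.
congr pair; first exact: NopK.
apply: ser3_ext => n i j; have := congr1 (fun h => h n.+1 i j) cycle_fg.
rewrite /dy1 /sub3 /scale3 /Mul1 /Mul2 /Ny /Nop /Dyq /Dop /shift /zero3 /zero2 /=.
rewrite /mulv1 /mulv2 exprS; case: i => [|i] /= /eqP; rewrite subr_eq0 => /eqP <-;
  by rewrite ?mulr0 ?mulrA.
Qed.

Lemma piy_dy1 (b : ser3 K * ser3 K) : piy (dy1 q b) = @zero1 K.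
Proof. by rewrite /piy /diag0 -/(diag (dy1 q b 0%N)) dy1_coef0 diag_mulv_diff. Qed.

Lemma piy_eq0 (e : ser3 K) : piy e = @zero1 K -> exists b, dy1 q b = e.
Proof.
move=> diag_e0.
exists (fun n => if n is 0%N then divv_diff (e 0%N) else @zero2 K,
        fun n i j => - e n.+1 i j).
apply: ser3_ext => -[|n] i j.
  by rewrite dy1_coef0 /= mulv_divv_diff.
rewrite /dy1 /sub3 /Mul1 /Mul2 /Ny /Nop /Dyq /Dop /zero2 /mulv1 /mulv2 /=.
by case: i => [|i]; case: j => [|j] /=; ring.
Qed.

Lemma left_complex_exact :
  exact_4term (@zero3 K) (@zero3 K, @zero3 K) (@zero3 K) (@zero1 K)
    (dy0 q) (@dy1 K q) (@piy K).
Proof.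
split.
- exact: dy0_inj.
- move=> [f g]; split=> [/dy1_eq0 <- | [a <-]]; last exact: dy1_dy0.
  by exists (shift f).
- by move=> e; split=> [/piy_eq0 | [b <-]]; last exact: piy_dy1.
- exact: diag0_surj.
Qed.

Definition swap3 (f : ser3 K) : ser3 K := fun n i j => f n j i.

Definition neg_swap3 (f : ser3 K) : ser3 K := fun n i j => - f n j i.

Definition neg_swap_pair (b : ser3 K * ser3 K) : ser3 K * ser3 K :=
  (neg_swap3 b.2, neg_swap3 b.1).

Lemma swap3K : involutive swap3.
Proof. by []. Qed.

Lemma neg_swap3K : involutive neg_swap3.
Proof. by move=> f; apply: ser3_ext => n i j; rewrite /neg_swap3 opprK. Qed.

Lemma neg_swap_pairK : involutive neg_swap_pair.
Proof. by move=> [f g]; rewrite /neg_swap_pair /= !neg_swap3K. Qed.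

Lemma dy0_neg_swap (a : ser3 K) : dy0 q (neg_swap3 a) = neg_swap_pair (dx0 q a).
Proof.
congr pair; apply: ser3_ext => -[|n] i j;
  rewrite /neg_swap3 /dy0 /dx0 /sub3 /scale3 /Mul1 /Mul2 /Ny /Nx /Nop /Dyq /Dxq /Dop
    /zero2 /= ?oppr0 //.
all: by rewrite /mulv1 /mulv2; case: i => [|i]; case: j => [|j] /=; ring.
Qed.

Lemma dy1_neg_swap (b : ser3 K * ser3 K) : dy1 q (neg_swap_pair b) = swap3 (dx1 q b).
Proof.
apply: ser3_ext => -[|n] i j;
  rewrite /neg_swap_pair /neg_swap3 /dy1 /dx1 /swap3 /add3 /sub3 /Mul1 /Mul2
    /Ny /Nx /Nop /Dyq /Dxq /Dop /zero2 /mulv1 /mulv2 /=;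
  by case: i => [|i]; case: j => [|j] /=; ring.
Qed.

Lemma piy_swap (e : ser3 K) : piy (swap3 e) = pix e.
Proof.
apply: ser1_ext => k; rewrite /piy /pix /diag0 /swap3 (reindex_inj rev_ord_inj) /=.
by apply: eq_bigr => i _; rewrite subSS subKn // -ltnS.
Qed.

Lemma right_complex_exact :
  exact_4term (@zero3 K) (@zero3 K, @zero3 K) (@zero3 K) (@zero1 K)
    (dx0 q) (@dx1 K q) (@pix K).
Proof.
have neg_swap0 : neg_swap3 (@zero3 K) = @zero3 K.
  by apply: ser3_ext => n i j; rewrite /neg_swap3 oppr0.
apply: (exact_4term_iso (iA := neg_swap3) (iB := neg_swap_pair) (iE := swap3)
  (iF := id) _ _ _ _ _ _ _ _ dy0_neg_swap dy1_neg_swap piy_swap left_complex_exact).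
- exact: inv_bij neg_swap3K.
- exact: inv_bij neg_swap_pairK.
- exact: inv_bij swap3K.
- exact: inj_id.
- exact: neg_swap0.
- by rewrite /neg_swap_pair /= neg_swap0.
- by [].
- by [].
Qed.

End DiagonalComplex.

(** Exactness holds for every [q]. *)
Theorem lemma5p1 (q : C) (hq0 : q != 0) (hq1 : q != 1) :
  exact_4term (@zero3 C) (@zero3 C, @zero3 C) (@zero3 C) (@zero1 C)
    (dy0 q) (@dy1 C q) (@piy C)
  /\
  exact_4term (@zero3 C) (@zero3 C, @zero3 C) (@zero3 C) (@zero1 C)
    (dx0 q) (@dx1 C q) (@pix C).
Proof. by split; [apply: left_complex_exact | apply: right_complex_exact]. Qed.
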